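(* Let $\mathcal{X},\mathcal{Y}$ be disjoint finite sets of Boolean variables, $alive\notin\mathcal{X}\cup\mathcal{Y}$ a fresh variable, $\psi_A$ an LTL formula over $\mathcal{X}\cup\mathcal{Y}$, $\phi$ an LTLf formula over $\mathcal{X}\cup\mathcal{Y}$, and $\psi=t(\phi)\wedge alive\wedge(alive\ U\ (G\neg alive))$. Then $\phi$ is realizable with respect to $\langle\mathcal{X},\mathcal{Y}\rangle$ under assumption $\psi_A$ if and only if the LTL formula $\psi_A\rightarrow\psi$ is realizable with respect to $\langle\mathcal{X},\mathcal{Y}\cup\{alive\}\rangle$.
   Context: LTLf formulas: $\phi ::= a \mid \neg\phi \mid \phi_1\wedge\phi_2 \mid X\phi \mid \phi_1 U\phi_2$ with the finite-trace semantics: $\rho,i\models X\phi$ iff $i+1<|\rho|$ and $\rho,i+1\models\phi$; $\rho,i\models\phi_1U\phi_2$ iff there is $j$ with $i\le j<|\rho|$, $\rho,j\models\phi_2$ and $\rho,k\models\phi_1$ for $i\le k<j$; atoms and Boolean connectives as usual; $\rho\models\phi$ iff $\rho,0\models\phi$. LTL: same syntax plus $F,G$, standard semantics over infinite traces. Translation $t$: $t(a)=a$; $t(\neg\phi_1)=\neg t(\phi_1)$; $t(\phi_1\wedge\phi_2)=t(\phi_1)\wedge t(\phi_2)$; $t(X\phi)=X(alive\wedge t(\phi))$; $t(\phi_1U\phi_2)=t(\phi_1)\,U\,(alive\wedge t(\phi_2))$. Realizability under assumption: $\phi$ is realizable with respect to $\langle\mathcal{X},\mathcal{Y}\rangle$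 under assumption $\psi_A$ if there is $g:(2^{\mathcal{X}})^+\to 2^{\mathcal{Y}}$ such that for every $\lambda=X_0,X_1,\ldots\in(2^{\mathcal{X}})^\omega$, if the infinite trace $\rho=(X_0\cup g(X_0)),(X_1\cup g(X_0,X_1)),\ldots$ satisfies $\psi_A$, then there is $k\ge0$ with $\phi$ true in the finite prefix $(X_0\cup g(X_0)),\ldots,(X_k\cup g(X_0,\ldots,X_k))$. LTL realizability: an LTL formula $\Psi$ over $\mathcal{X}\cup\mathcal{Y}'$ ($\mathcal{X},\mathcal{Y}'$ disjoint) is realizable with respect to $\langle\mathcal{X},\mathcal{Y}'\rangle$ if there is $f:(2^{\mathcal{X}})^+\to 2^{\mathcal{Y}'}$ such that for every $\lambda=X_0,X_1,\ldots\in(2^{\mathcal{X}})^\omega$, $\Psi$ holds on the infinite trace $(X_0\cup f(X_0)),(X_1\cup f(X_0,X_1)),(X_2\cup f(X_0,X_1,X_2)),\ldots$. *)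

From mathcomp Require Import all_boot.
Set Implicit Arguments. Unset Strict Implicit. Unset Printing Implicit Defensive.

Section Logic.
Variable V : finType.

Inductive ltlf : Type :=
| FAtom of V | FNot of ltlf | FAnd of ltlf & ltlf | FNext of ltlf | FUntil of ltlf & ltlf.

Inductive ltl : Type :=
| LAtom of V | LNot of ltl | LAnd of ltl & ltl | LNext of ltl | LUntil of ltl & ltl
| LF of ltl | LG of ltl.

Definition LImp (p q : ltl) : ltl := LNot (LAnd p (LNot q)).

Fixpoint ltlf_atoms (p : ltlf) : seq V :=
  match p with
  | FAtom a => [:: a]
  | FNot p1 | FNext p1 => ltlf_atoms p1
  | FAnd p1 p2 | FUntil p1 p2 => ltlf_atoms p1 ++ ltlf_atoms p2
  end.

Fixpoint ltl_atoms (p : ltl) : seq V :=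
  match p with
  | LAtom a => [:: a]
  | LNot p1 | LNext p1 | LF p1 | LG p1 => ltl_atoms p1
  | LAnd p1 p2 | LUntil p1 p2 => ltl_atoms p1 ++ ltl_atoms p2
  end.

(* finite-trace semantics: rho, i |= p (only meaningful for i < size rho) *)
Fixpoint ltlf_sat (rho : seq {set V}) (i : nat) (p : ltlf) : Prop :=
  match p with
  | FAtom a => a \in nth set0 rho i
  | FNot p1 => ~ ltlf_sat rho i p1
  | FAnd p1 p2 => ltlf_sat rho i p1 /\ ltlf_sat rho i p2
  | FNext p1 => i.+1 < size rho /\ ltlf_sat rho i.+1 p1
  | FUntil p1 p2 => exists j, [/\ i <= j, j < size rho, ltlf_sat rho j p2 &
                       forall k, i <= k -> k < j -> ltlf_sat rho k p1]
  end.

Definition ltlf_models (rho : seq {set V}) (p : ltlf) : Prop := ltlf_sat rho 0 p.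

Fixpoint ltl_sat (rho : nat -> {set V}) (i : nat) (p : ltl) : Prop :=
  match p with
  | LAtom a => a \in rho i
  | LNot p1 => ~ ltl_sat rho i p1
  | LAnd p1 p2 => ltl_sat rho i p1 /\ ltl_sat rho i p2
  | LNext p1 => ltl_sat rho i.+1 p1
  | LUntil p1 p2 => exists j, [/\ i <= j, ltl_sat rho j p2 &
                       forall k, i <= k -> k < j -> ltl_sat rho k p1]
  | LF p1 => exists j, i <= j /\ ltl_sat rho j p1
  | LG p1 => forall j, i <= j -> ltl_sat rho j p1
  end.

Definition ltl_models (rho : nat -> {set V}) (p : ltl) : Prop := ltl_sat rho 0 p.

Fixpoint transl (alive : V) (p : ltlf) : ltl :=
  match p with
  | FAtom a => LAtom a
  | FNot p1 => LNot (transl alive p1)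
  | FAnd p1 p2 => LAnd (transl alive p1) (transl alive p2)
  | FNext p1 => LNext (LAnd (LAtom alive) (transl alive p1))
  | FUntil p1 p2 => LUntil (transl alive p1) (LAnd (LAtom alive) (transl alive p2))
  end.

Definition psi_of (alive : V) (phi : ltlf) : ltl :=
  LAnd (transl alive phi)
       (LAnd (LAtom alive) (LUntil (LAtom alive) (LG (LNot (LAtom alive))))).

(* A strategy is a function on histories
   (nonempty sequences of input letters; it is only ever applied to them). *)
Definition play (g : seq {set V} -> {set V}) (lam : nat -> {set V}) : nat -> {set V} :=
  fun i => lam i :|: g (mkseq lam i.+1).

Definition realizable_under (X Y : {set V}) (psiA : ltl) (phi : ltlf) : Prop :=
  exists g : seq {set V} -> {set V},
    (forall h, g h \subset Y) /\
    forall lam : nat -> {set V}, (forall i, lam i \subset X) ->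
      ltl_models (play g lam) psiA ->
      exists k, ltlf_models (mkseq (play g lam) k.+1) phi.

Definition ltl_realizable (X Y' : {set V}) (Psi : ltl) : Prop :=
  exists f : seq {set V} -> {set V},
    (forall h, f h \subset Y') /\
    forall lam : nat -> {set V}, (forall i, lam i \subset X) ->
      ltl_models (play f lam) Psi.

End Logic.

(* A strategy for the finite game is turned into one for the LTL game by
   additionally raising [alive] until (the first time) the produced prefix
   satisfies [phi] and lowering it forever afterwards; then [t(phi)] on the
   infinite play is exactly [phi] on the alive prefix, and [psi] holds.
   Conversely, an LTL strategy with [alive] removed plays the finite game:
   [psi] forces [alive] to hold on a finite nonempty prefix, on which [phi]
   holds.  Since neither [psiA] nor [phi] mentions [alive], the two plays
   satisfy the same assumption. *)

From Stdlib Require Import Classical ClassicalEpsilon Wf_nat.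
From mathcomp Require Import all_boot.

Set Implicit Arguments.
Unset Strict Implicit.
Unset Printing Implicit Defensive.

Lemma take_mkseq (T : Type) (f : nat -> T) m n :
  take m (mkseq f n) = mkseq f (minn m n).
Proof. by rewrite /mkseq -map_take take_iota. Qed.

Lemma eq_in_mkseq (T : Type) (f1 f2 : nat -> T) n :
  {in gtn n, f1 =1 f2} -> mkseq f1 n = mkseq f2 n.
Proof. by move=> eq_f; apply/eq_in_map => m; rewrite mem_iota; apply: eq_f. Qed.

Lemma subset_catP (T : eqType) (s1 s2 : seq T) (A : {pred T}) :
  {subset s1 ++ s2 <= A} <-> {subset s1 <= A} /\ {subset s2 <= A}.
Proof.
split=> [sub|[sub1 sub2] a]; last by rewrite mem_cat => /orP[/sub1|/sub2].
by split=> a a_s; apply: sub; rewrite mem_cat a_s ?orbT.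
Qed.

Section Semantics.
Variable V : finType.
Implicit Types (A : {pred V}) (rho : nat -> {set V}).

Lemma ltl_sat_eq_on A (q : ltl V) (r1 r2 : nat -> {set V}) :
  {subset ltl_atoms q <= A} ->
  (forall i, {in A, forall a, (a \in r1 i) = (a \in r2 i)}) ->
  forall i, ltl_sat r1 i q <-> ltl_sat r2 i q.
Proof.
move=> + eq_r; elim: q => [a|q IH|q1 IH1 q2 IH2|q IH|q1 IH1 q2 IH2|q IH|q IH] /=.
- by move=> sub i; rewrite eq_r // sub // inE.
- by move=> /IH E i; rewrite E.
- by move=> /subset_catP[/IH1 E1 /IH2 E2] i; rewrite E1 E2.
- by move=> /IH E i; rewrite E.
- move=> /subset_catP[/IH1 E1 /IH2 E2].
  by move=> i; split=> -[j [ij sat_j before_j]]; exists j;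
    (split=> // [|k ik kj]; [apply/E2 | apply/E1; apply: before_j]).
- by move=> /IH E i; split=> -[j [ij sat_j]]; exists j; split=> //; apply/E.
- by move=> /IH E i; split=> sat_j j ij; apply/E; apply: sat_j.
Qed.

Lemma ltlf_sat_mkseq_eq_on A (p : ltlf V) (r1 r2 : nat -> {set V}) :
  {subset ltlf_atoms p <= A} ->
  (forall i, {in A, forall a, (a \in r1 i) = (a \in r2 i)}) ->
  forall n i, ltlf_sat (mkseq r1 n) i p <-> ltlf_sat (mkseq r2 n) i p.
Proof.
move=> + eq_r n; elim: p => [a|q IH|q1 IH1 q2 IH2|q IH|q1 IH1 q2 IH2] /=.
- move=> sub i; have [lt_in|le_ni] := ltnP i n.
    by rewrite !nth_mkseq // eq_r // sub // inE.
  by rewrite !nth_default ?size_mkseq.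
- by move=> /IH E i; rewrite E.
- by move=> /subset_catP[/IH1 E1 /IH2 E2] i; rewrite E1 E2.
- by move=> /IH E i; rewrite E !size_mkseq.
- move=> /subset_catP[/IH1 E1 /IH2 E2].
  move=> i; rewrite !size_mkseq.
  by split=> -[j [ij jn sat_j before_j]]; exists j;
    (split=> // [|k ik kj]; [apply/E2 | apply/E1; apply: before_j]).
Qed.

Variable alive : V.

(* While [alive] holds exactly on the first [n] positions, [t] simulates the
   finite semantics on that prefix: the conjuncts [alive] it inserts under [X]
   and [U] are exactly the bounds [i.+1 < n] and [j < n]. *)
Lemma transl_sat (p : ltlf V) rho n :
  (forall i, (alive \in rho i) = (i < n)) ->
  forall i, i < n -> ltl_sat rho i (transl alive p) <-> ltlf_sat (mkseq rho n) i p.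
Proof.
move=> alive_rho; elim: p => [a|q IH|q1 IH1 q2 IH2|q IH|q1 IH1 q2 IH2] i lt_in /=.
- by rewrite nth_mkseq.
- by rewrite IH.
- by rewrite IH1 // IH2.
- rewrite alive_rho size_mkseq.
  by split=> -[lt_i1n sat_q]; split; rewrite // -?IH // IH.
- rewrite size_mkseq; split.
  + move=> [j [ij [alive_j sat_j] before_j]].
    have lt_jn : j < n by rewrite -alive_rho.
    exists j; split=> // [|k ik kj]; first exact/IH2.
    by apply/(IH1 k (ltn_trans kj lt_jn))/before_j.
  + move=> [j [ij lt_jn sat_j before_j]].
    exists j; split=> // [|k ik kj]; first by rewrite alive_rho IH2.
    by apply/(IH1 k (ltn_trans kj lt_jn))/before_j.
Qed.

Lemma alive_prefix_sat rho :
  ltl_sat rho 0 (LAnd (LAtom alive) (LUntil (LAtom alive) (LG (LNot (LAtom alive)))))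
  <-> exists n, forall i, (alive \in rho i) = (i < n.+1).
Proof.
split=> /=.
- move=> [alive0 [[|n] [_ dead_after alive_before]]].
    by have := dead_after 0 (leqnn 0).
  exists n => i; have [lt_in|le_ni] := ltnP i n.+1; first exact: alive_before.
  exact/negbTE/negP/dead_after.
- move=> [n alive_rho]; split; first by rewrite alive_rho.
  exists n.+1; split=> // [j|k _]; last by rewrite alive_rho.
  by move=> le_nj; rewrite alive_rho ltnNge le_nj.
Qed.

Lemma psi_of_sat rho (phi : ltlf V) :
  ltl_sat rho 0 (psi_of alive phi) <->
  exists n, (forall i, (alive \in rho i) = (i < n.+1)) /\
            ltlf_models (mkseq rho n.+1) phi.
Proof.
split=> [[sat_t /alive_prefix_sat [n alive_rho]]|[n [alive_rho sat_phi]]].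
  by exists n; split; last exact/(transl_sat phi alive_rho (ltn0Sn n)).
split; first exact/(transl_sat phi alive_rho (ltn0Sn n)).
by apply/alive_prefix_sat; exists n.
Qed.

End Semantics.

Lemma in_play_off (V : finType) (a : V) (f1 f2 : seq {set V} -> {set V}) lam i b :
  b != a -> (forall h, f1 h :\ a = f2 h :\ a) ->
  (b \in play f1 lam i) = (b \in play f2 lam i).
Proof.
move=> ba eq_f; have /setP/(_ b) := eq_f (mkseq lam i.+1).
by rewrite /play !inE ba /= => ->.
Qed.

Lemma ex_minnP_classical (P : nat -> Prop) :
  (exists n, P n) -> exists n, P n /\ forall m, m < n -> ~ P m.
Proof.
move=> /(dec_inh_nat_subset_has_unique_least_element _ (fun n => classic (P n))).
move=> [n [[Pn n_least] _]]; exists n; split=> // m lt_mn /n_least/leP.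
by rewrite leqNgt lt_mn.
Qed.

Section StopStrategy.
Variables (V : finType) (alive : V) (phi : ltlf V) (g : seq {set V} -> {set V}).

Definition hist_trace (h : seq {set V}) : seq {set V} :=
  mkseq (fun m => nth set0 h m :|: g (take m.+1 h)) (size h).

Definition accepted_before (rho : seq {set V}) : Prop :=
  exists2 k, k.+1 < size rho & ltlf_models (take k.+1 rho) phi.

Definition stop_strategy (h : seq {set V}) : {set V} :=
  g h :|: if excluded_middle_informative (accepted_before (hist_trace h))
          then set0 else [set alive].

Lemma hist_trace_mkseq (lam : nat -> {set V}) n :
  hist_trace (mkseq lam n) = mkseq (play g lam) n.
Proof.
rewrite /hist_trace size_mkseq; apply: eq_in_mkseq => m lt_mn.
by rewrite nth_mkseq // take_mkseq (minn_idPl lt_mn).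
Qed.

Lemma stop_strategy_sub (Y : {set V}) h :
  g h \subset Y -> stop_strategy h \subset alive |: Y.
Proof.
move=> gY; rewrite /stop_strategy subUset (subset_trans gY) ?subsetUr //.
by case: excluded_middle_informative => ?; rewrite ?sub0set ?sub1set ?setU11.
Qed.

Lemma stop_strategy_off_alive h : stop_strategy h :\ alive = g h :\ alive.
Proof.
apply/setP => a; rewrite /stop_strategy !inE.
case: excluded_middle_informative => ? /=; rewrite ?inE.
all: by case: eqP; rewrite /= ?orbF.
Qed.

Hypothesis g_dead : forall h, alive \notin g h.

Lemma alive_in_play_stop (lam : nat -> {set V}) i : alive \notin lam i ->
  alive \in play stop_strategy lam i <->
  ~ exists2 k, k < i & ltlf_models (mkseq (play g lam) k.+1) phi.
Proof.
rewrite {1}/play /stop_strategy hist_trace_mkseq !inE => /negbTE-> /=.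
rewrite (negbTE (g_dead _)) /accepted_before size_mkseq.
have prefixE k :
    k < i -> take k.+1 (mkseq (play g lam) i.+1) = mkseq (play g lam) k.+1.
  by move=> lt_ki; rewrite take_mkseq (minn_idPl _) // ltnW.
case: excluded_middle_informative => [[k lt_ki sat_k]|not_acc]; rewrite ?inE ?eqxx.
  by split=> // not_acc; case: not_acc; exists k; rewrite // -prefixE.
by split=> // _ [k lt_ki sat_k]; apply: not_acc; exists k; rewrite // prefixE.
Qed.

Lemma alive_in_play_stop_least (lam : nat -> {set V}) k :
  (forall i, alive \notin lam i) ->
  ltlf_models (mkseq (play g lam) k.+1) phi ->
  (forall m, m < k -> ~ ltlf_models (mkseq (play g lam) m.+1) phi) ->
  forall i, (alive \in play stop_strategy lam i) = (i < k.+1).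
Proof.
move=> lam_dead sat_k k_least i; apply/idP/idP => [|le_ik].
  move=> /(alive_in_play_stop (lam_dead i)); rewrite ltnNge.
  by apply: contra_notN => lt_ki; exists k.
apply/(alive_in_play_stop (lam_dead i)) => -[m lt_mi sat_m].
by apply: (k_least m) => //; apply: leq_trans lt_mi le_ik.
Qed.

End StopStrategy.

Section Reduction.
Variables (V : finType) (X Y : {set V}) (alive : V) (psiA : ltl V) (phi : ltlf V).
Hypotheses (alive_XY : alive \notin X :|: Y)
  (atoms_psiA : {subset ltl_atoms psiA <= X :|: Y})
  (atoms_phi : {subset ltlf_atoms phi <= X :|: Y}).

Let XY_alive : {in X :|: Y, forall a, a != alive}.
Proof. by move=> a a_XY; apply: contraNneq alive_XY => <-. Qed.

Let alive_notin_sub (Z A : {set V}) :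
  Z \subset A -> A \subset X :|: Y -> alive \notin Z.
Proof. by move=> ZA AXY; apply: contra alive_XY => /(subsetP ZA)/(subsetP AXY). Qed.

Lemma ltl_realizable_of_realizable_under :
  realizable_under X Y psiA phi ->
  ltl_realizable X (alive |: Y) (LImp psiA (psi_of alive phi)).
Proof.
move=> [g [gY g_wins]]; exists (stop_strategy alive phi g).
split=> [h|lam lamX]; first exact: stop_strategy_sub.
have g_dead h : alive \notin g h by apply: alive_notin_sub (gY h) (subsetUr _ _).
have lam_dead i : alive \notin lam i by apply: alive_notin_sub (lamX i) (subsetUl _ _).
have agree i : {in X :|: Y, forall a,
    (a \in play (stop_strategy alive phi g) lam i) = (a \in play g lam i)}.
  move=> a /XY_alive a_alive.
  exact: in_play_off a_alive (@stop_strategy_off_alive _ _ _ _).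
move=> [/(ltl_sat_eq_on atoms_psiA agree) /(g_wins _ lamX) win []].
have [k [sat_k k_least]] := ex_minnP_classical win.
apply/psi_of_sat; exists k; split.
  exact: (alive_in_play_stop_least g_dead lam_dead sat_k k_least).
exact/(ltlf_sat_mkseq_eq_on atoms_phi agree).
Qed.

Lemma realizable_under_of_ltl_realizable :
  ltl_realizable X (alive |: Y) (LImp psiA (psi_of alive phi)) ->
  realizable_under X Y psiA phi.
Proof.
move=> [f [fY f_wins]]; exists (fun h => f h :\ alive); split=> [h|lam lamX sat_A].
  by rewrite subDset fY.
have agree i : {in X :|: Y, forall a,
    (a \in play (fun h => f h :\ alive) lam i) = (a \in play f lam i)}.
  move=> a /XY_alive a_alive.
  by apply: in_play_off a_alive _ => h; rewrite setDDl setUid.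
have /psi_of_sat [n [_ sat_phi]] : ltl_sat (play f lam) 0 (psi_of alive phi).
  apply: NNPP => not_psi; apply: (f_wins _ lamX); split=> //.
  exact/(ltl_sat_eq_on atoms_psiA agree).
by exists n; apply/(ltlf_sat_mkseq_eq_on atoms_phi agree).
Qed.

End Reduction.

Theorem mainTheorem10 (V : finType) (X Y : {set V}) (alive : V)
  (psiA : ltl V) (phi : ltlf V) :
  [disjoint X & Y] ->
  alive \notin X :|: Y ->
  {subset ltl_atoms psiA <= X :|: Y} ->
  {subset ltlf_atoms phi <= X :|: Y} ->
  (realizable_under X Y psiA phi <->
   ltl_realizable X (alive |: Y) (LImp psiA (psi_of alive phi))).
Proof.
move=> _ alive_XY atoms_psiA atoms_phi; split.
  exact: ltl_realizable_of_realizable_under.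
exact: realizable_under_of_ltl_realizable.
Qed.
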